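(* Let $\mathcal{X}$ and $\mathcal{Y}$ be finite subsets of $\mathbb{R}$, each with $N$ elements. Let $S$ be a binary random variable with values $s_0,s_1$, each with positive probability, and $X$ a random variable with values in $\mathcal{X}$ with $P^X_i=\mathbb{P}(X=i)>0$ for all $i\in\mathcal{X}$; let $P^{X_s}_i=\mathbb{P}(X=i\mid S=s)$. Let $P^{\tilde X}\in\mathbb{R}^{\mathcal{Y}}$ be a probability vector, $\gamma\in\Pi(P^X,P^{\tilde X})$, and let $\tilde X$ be the projected variable defined by: conditionally on $(X,S)=(i,s)$, $\tilde X=j$ with probability $\gamma_{i,j}/P^X_i$; write $P^{\tilde X_s}_j=\mathbb{P}(\tilde X=j\mid S=s)$. Let $V=(P^{X_{s_0}}-P^{X_{s_1}})/P^X$ (element-wise) and $\overline{\mathcal{X}}=\{i\in\mathcal{X}: V_i\neq 0\}$. Suppose $\Lambda\in\mathbb{R}^{\mathcal{Y}}_+$ satisfies $$-\Lambda_j\le \sum_{i\in\overline{\mathcal{X}}}\gamma_{i,j}V_i\le\Lambda_j\quad\text{for all } j\in\mathcal{Y}.$$ Then $\|\gamma'V\|_1\le\|\Lambda\|_1$ and $$\operatorname{TV}\big(P^{\tilde X_{s_0}},P^{\tilde X_{s_1}}\big)=\frac{\|\gamma'V\|_1}{2}\le\frac{\|\Lambda\|_1}{2}.$$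
   Context: $\Pi(P,Q)=\{\gamma\in\mathbb{R}_+^{\mathcal{X}\times\mathcal{Y}}:\gamma\mathbb{1}=P,\ \gamma'\mathbb{1}=Q\}$. For probability vectors $P,Q$ on $\mathcal{Y}$, the total variation distance is $\operatorname{TV}(P,Q)=\frac12\sum_{j\in\mathcal{Y}}|P_j-Q_j|=\frac12\|P-Q\|_1$. *)

From mathcomp Require Import all_boot all_order all_algebra.
Set Implicit Arguments. Unset Strict Implicit. Unset Printing Implicit Defensive.
Import Order.TTheory GRing.Theory Num.Theory.
Local Open Scope ring_scope.

(* Discrete setting: the finite value sets of X and of the projected variable
   are finite types T and U; the binary variable S takes values in bool,
   with s0 := true and s1 := false.  The joint law of (X,S) is given by a
   pmf pXS : T -> bool -> R, pXS i s = P(X = i, S = s). *)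

Section Defs.
Variables (R : realFieldType) (T U : finType).

Definition norm1 (v : U -> R) : R := \sum_(j : U) `|v j|.

Definition TV (P Q : U -> R) : R := 2^-1 * \sum_(j : U) `|P j - Q j|.

Definition is_prob (A : finType) (P : A -> R) : Prop :=
  (forall a, 0 <= P a) /\ \sum_(a : A) P a = 1.

Definition is_joint_pmf (pXS : T -> bool -> R) : Prop :=
  (forall i s, 0 <= pXS i s) /\ \sum_(i : T) \sum_(s : bool) pXS i s = 1.

Definition margS (pXS : T -> bool -> R) (s : bool) : R := \sum_(i : T) pXS i s.

Definition margX (pXS : T -> bool -> R) (i : T) : R := \sum_(s : bool) pXS i s.

Definition condX (pXS : T -> bool -> R) (s : bool) (i : T) : R :=
  pXS i s / margS pXS s.

Definition coupling (P : T -> R) (Q : U -> R) (gamma : T -> U -> R) : Prop :=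
  (forall i j, 0 <= gamma i j) /\
  (forall i, \sum_(j : U) gamma i j = P i) /\
  (forall j, \sum_(i : T) gamma i j = Q j).

(* Projected variable Xt: conditionally on (X,S) = (i,s), Xt = j with
   probability gamma i j / P^X_i.  Hence
   P(Xt = j, S = s) = sum_i P(X = i, S = s) * gamma i j / P^X_i and
   P^{Xt_s}_j = P(Xt = j | S = s). *)
Definition condXt (pXS : T -> bool -> R) (gamma : T -> U -> R) (s : bool) (j : U) : R :=
  (\sum_(i : T) pXS i s * (gamma i j / margX pXS i)) / margS pXS s.

Definition Vvec (pXS : T -> bool -> R) (i : T) : R :=
  (condX pXS true i - condX pXS false i) / margX pXS i.

Definition gammaT_V (gamma : T -> U -> R) (V : T -> R) (j : U) : R :=
  \sum_(i : T) gamma i j * V i.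

End Defs.

From mathcomp Require Import all_boot all_order all_algebra.
From mathcomp Require Import ring lra.
Import Order.TTheory GRing.Theory Num.Theory.
Local Open Scope ring_scope.

(* Conditionally on S = s, the law of the projected variable is gamma' applied
   to P^{X_s} / P^X, so by linearity the difference of the two conditional laws
   is gamma' V.  Its l1 norm is bounded entrywise by Lambda, since the indices
   with V_i = 0 do not contribute to (gamma' V)_j. *)

Section ProjectedTV.
Variables (R : realFieldType) (T U : finType).

Lemma norm1_le_bounded (v w : U -> R) :
  (forall j, - w j <= v j <= w j) -> norm1 v <= norm1 w.
Proof.
move=> vw; apply: ler_sum => j _.
have w_ge0 : 0 <= w j by have /andP[] := vw j; lra.
by rewrite (ger0_norm w_ge0) ler_norml.
Qed.

Lemma norm1_half_le (v w : U -> R) : norm1 v <= norm1 w -> norm1 v / 2 <= norm1 w / 2.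
Proof. by move=> vw; rewrite ler_pM2r // invr_gt0 ltr0n. Qed.

Lemma gammaT_V_support (gamma : T -> U -> R) (V : T -> R) (j : U) :
  \sum_(i | V i != 0) gamma i j * V i = gammaT_V gamma V j.
Proof.
rewrite /gammaT_V [RHS](bigID (fun i => V i != 0)) /= [X in _ + X]big1 ?addr0 //.
by move=> i /negPn/eqP ->; rewrite mulr0.
Qed.

Lemma condXt_diff (pXS : T -> bool -> R) (gamma : T -> U -> R) (j : U) :
  condXt pXS gamma true j - condXt pXS gamma false j = gammaT_V gamma (Vvec pXS) j.
Proof.
rewrite /condXt /gammaT_V !mulr_suml -sumrB; apply: eq_bigr => i _.
by rewrite /Vvec /condX; ring.
Qed.

Lemma TV_condXt (pXS : T -> bool -> R) (gamma : T -> U -> R) :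
  TV (condXt pXS gamma true) (condXt pXS gamma false)
    = norm1 (gammaT_V gamma (Vvec pXS)) / 2.
Proof.
by rewrite /TV /norm1 mulrC; congr (_ * _); apply: eq_bigr => j _; rewrite condXt_diff.
Qed.

End ProjectedTV.

Theorem mainTheorem3 (R : realFieldType) (T U : finType) (N : nat)
  (hT : #|T| = N) (hU : #|U| = N)
  (pXS : T -> bool -> R) (PXt : U -> R) (gamma : T -> U -> R) (Lambda : U -> R) :
  is_joint_pmf pXS ->
  0 < margS pXS true -> 0 < margS pXS false ->
  (forall i, 0 < margX pXS i) ->
  is_prob PXt ->
  coupling (margX pXS) PXt gamma ->
  (forall j, 0 <= Lambda j) ->
  (forall j, - Lambda j <= \sum_(i : T | Vvec pXS i != 0) gamma i j * Vvec pXS i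
             <= Lambda j) ->
  norm1 (gammaT_V gamma (Vvec pXS)) <= norm1 Lambda /\
  TV (condXt pXS gamma true) (condXt pXS gamma false)
     = norm1 (gammaT_V gamma (Vvec pXS)) / 2 /\
  norm1 (gammaT_V gamma (Vvec pXS)) / 2 <= norm1 Lambda / 2.
Proof.
move=> _ _ _ _ _ _ _ Lambda_bound.
have norm_le : norm1 (gammaT_V gamma (Vvec pXS)) <= norm1 Lambda.
  by apply: norm1_le_bounded => j; rewrite -gammaT_V_support.
by split; [|split]; [exact: norm_le | exact: TV_condXt | exact: norm1_half_le].
Qed.
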